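(* Let $G$ be a connected graph with $n\ge 12$ vertices and $n+k$ edges, where $1\le k\le 10$. If the minimum degree satisfies $\delta(G)\ge 2$, then $R(G)>\sqrt{n-1}+\frac{2(k+1)}{n\sqrt{n-1}}$.
   Context: All graphs are finite and simple. For a vertex $u$, $d(u)$ is its degree. The Randić index is $R(G)=\sum_{\{u,v\}\in E(G)} \frac{1}{\sqrt{d(u)d(v)}}$. *)

From HB Require Import structures.
From mathcomp Require Import all_boot all_order all_algebra.
Set Implicit Arguments. Unset Strict Implicit. Unset Printing Implicit Defensive.
Import Order.TTheory GRing.Theory Num.Theory.

Definition simple_graph (T : finType) (e : rel T) : Prop :=
  symmetric e /\ irreflexive e.

Definition deg (T : finType) (e : rel T) (u : T) : nat := #|[set v | e u v]|.

(* Edge set E(G): each unordered edge {u,v} represented once, as the ordered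
   pair (u,v) with enum_rank u < enum_rank v. *)
Definition edges (T : finType) (e : rel T) : {set T * T} :=
  [set p : T * T | e p.1 p.2 && (enum_rank p.1 < enum_rank p.2)%N].

Definition connected (T : finType) (e : rel T) : Prop :=
  forall x y : T, connect e x y.

Definition randic (R : rcfType) (T : finType) (e : rel T) : R :=
  (\sum_(p in edges e) (Num.sqrt ((deg e p.1 * deg e p.2)%:R : R))^-1)%R.

From HB Require Import structures.
From mathcomp Require Import all_boot all_order all_algebra.
From mathcomp Require Import ring lra.
Import Order.TTheory GRing.Theory Num.Theory.

Set Implicit Arguments.
Unset Strict Implicit.
Unset Printing Implicit Defensive.

(* Since all degrees are at least 2, (1/sqrt 2 - 1/sqrt d(u)) (1/sqrt 2 - 1/sqrt d(v)) >= 0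
   bounds each edge term below by a sum of two vertex terms, so that
   R(G) >= sum_u (sqrt d(u) / sqrt 2 - d(u)/4).  As 2 <= d(u) <= n - 1, concavity of the
   square root lets us replace sqrt d(u) by its chord through d = 2 and d = n - 1; the bound
   becomes affine in the degrees, and sum_u d(u) = 2(n + k) turns it into
   (n - k)/2 + 2k / (sqrt 2 (sqrt 2 + sqrt (n - 1))), which beats the claimed bound for
   n >= 12 and k <= 10. *)

Local Open Scope ring_scope.

Section Handshake.
Variables (T : finType) (e : rel T).
Hypotheses (e_sym : symmetric e) (e_irr : irreflexive e).

Lemma deg_lt_card (u : T) : (deg e u < #|T|)%N.
Proof.
rewrite /deg -cardsT; apply: proper_card; apply/properP; split; first exact: subsetT.
by exists u; rewrite ?inE ?e_irr.
Qed.

Lemma sum_edges_ends (V : nmodType) (G : T -> V) :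
  \sum_(p in edges e) (G p.1 + G p.2) = \sum_u G u *+ deg e u.
Proof.
have arcs : \sum_u G u *+ deg e u = \sum_(p | e p.1 p.2) G p.1.
  rewrite -(pair_big_dep xpredT e (fun u _ => G u)) /=.
  by apply: eq_bigr => u _; rewrite -big_set /= sumr_const.
rewrite arcs big_split /= [RHS](bigID (fun p : T * T => enum_rank p.1 < enum_rank p.2)%N) /=.
congr (_ + _); first by apply: eq_bigl => p; rewrite inE.
rewrite (reindex_inj (h := fun p : T * T => (p.2, p.1))) /=; last first.
  by move=> [a b] [c d] [-> ->].
apply: eq_bigl => -[u v] /=; rewrite inE /= (e_sym v u).
case euv: (e u v) => //=.
have : enum_rank u != enum_rank v.
  by apply: contraTneq euv => /enum_rank_inj ->; rewrite e_irr.
by rewrite -leqNgt ltn_neqAle eq_sym => ->.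
Qed.

Lemma sum_deg : (\sum_u deg e u = 2 * #|edges e|)%N.
Proof.
have := @sum_edges_ends nat (fun _ => 1%N).
rewrite sum_nat_const mulnC => ->.
by apply: eq_bigr => u _; rewrite natn.
Qed.

End Handshake.

Lemma inv_mul_ge_split (R : realFieldType) (q a b : R) :
  0 < q -> q <= a -> q <= b -> (q * a)^-1 + (q * b)^-1 - (q * q)^-1 <= (a * b)^-1.
Proof.
move=> q_gt0 qa qb.
have a_gt0 : 0 < a by apply: lt_le_trans qa.
have b_gt0 : 0 < b by apply: lt_le_trans qb.
have : 0 <= (q^-1 - a^-1) * (q^-1 - b^-1).
  by apply: mulr_ge0; rewrite subr_ge0 lef_pV2 ?posrE.
rewrite !invfM; lra.
Qed.

Lemma chord_le (R : realFieldType) (q a s : R) :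
  0 < q -> q <= a -> a <= s -> q + (a * a - q * q) / (q + s) <= a.
Proof.
move=> q_gt0 qa as_.
have qs_gt0 : 0 < q + s by rewrite addr_gt0 // (lt_le_trans q_gt0 (le_trans qa as_)).
rewrite -subr_ge0 -(pmulr_rge0 _ qs_gt0).
have -> : (q + s) * (a - (q + (a * a - q * q) / (q + s))) = (a - q) * (s - a).
  by field; rewrite gt_eqF.
by rewrite mulr_ge0 // subr_ge0.
Qed.

Lemma chord_vertex_bound (R : realFieldType) (q a s : R) :
  0 < q -> q <= a -> a <= s ->
  1 + (a * a - q * q) / (q * (q + s)) - a * a / 4 <= a * a * ((q * a)^-1 - 1/4).
Proof.
move=> q_gt0 qa as_.
have a_gt0 : 0 < a := lt_le_trans q_gt0 qa.
have qs_gt0 : 0 < q + s := ltr_wpDr (le_trans (ltW a_gt0) as_) q_gt0.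
have := chord_le q_gt0 qa as_; rewrite -subr_ge0 => chord.
rewrite -subr_ge0.
have -> : a * a * ((q * a)^-1 - 1/4) - (1 + (a * a - q * q) / (q * (q + s)) - a * a / 4)
        = (a - (q + (a * a - q * q) / (q + s))) / q.
  by field; rewrite !gt_eqF.
exact: divr_ge0 chord (ltW q_gt0).
Qed.

Section RandicVertexSum.
Variables (R : rcfType) (T : finType) (e : rel T).
Hypotheses (e_sym : symmetric e) (e_irr : irreflexive e).
Hypothesis deg_ge2 : forall u, (2 <= deg e u)%N.

Lemma randic_ge_vertex_sum :
  \sum_u ((Num.sqrt 2 * Num.sqrt (deg e u)%:R)^-1 - 1/4) *+ deg e u <= randic R e.
Proof.
rewrite -sum_edges_ends //; apply: ler_sum => p _.
have q_gt0 : 0 < Num.sqrt 2 :> R by rewrite sqrtr_gt0.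
have sqrt2_le u : Num.sqrt 2 <= Num.sqrt (deg e u)%:R :> R.
  by rewrite ler_sqrt ?ler0n // (ler_nat R 2).
have := inv_mul_ge_split q_gt0 (sqrt2_le p.1) (sqrt2_le p.2).
by rewrite natrM sqrtrM ?ler0n // -expr2 sqr_sqrtr //; lra.
Qed.

End RandicVertexSum.

Lemma gap_poly_gt0 (R : realFieldType) (s k : R) : 33/10 <= s -> 1 <= k <= 10 ->
  0 < (s*s + 1 - k) * (s*s + 1) * s * (17/12 * s + 2) + 4 * k * (s*s + 1) * s
      - 2 * (s*s + 1) * s * s * (17/12 * s + 2) - 4 * (k + 1) * (17/12 * s + 2).
Proof.
move=> s_ge /andP[k_ge1 k_le10].
have [t t_ge0 ->] : exists2 t, 0 <= t & s = 33/10 + t.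
  by exists (s - 33/10); [rewrite subr_ge0 | ring].
(* After substituting s = 33/10 + t, positivity is a linear consequence of the nonnegative
   products below. *)
have t2 : 0 <= t^+2 by rewrite exprn_ge0.
have t3 : 0 <= t^+3 by rewrite exprn_ge0.
have t4 : 0 <= t^+4 by rewrite exprn_ge0.
have t5 : 0 <= t^+5 by rewrite exprn_ge0.
have t6 : 0 <= t^+6 by rewrite exprn_ge0.
have u0 : 0 <= 10 - k by lra.
have u1 : 0 <= (10 - k) * t by rewrite mulr_ge0.
have u2 : 0 <= (10 - k) * t^+2 by rewrite mulr_ge0.
have u3 : 0 <= (10 - k) * t^+3 by rewrite mulr_ge0.
have u4 : 0 <= (10 - k) * t^+4 by rewrite mulr_ge0.
rewrite !exprS expr0 !mulr1 in t2 t3 t4 t5 t6 u2 u3 u4.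
lra.
Qed.

Lemma target_lt_bound (R : realFieldType) (s q k : R) :
  11 <= s * s -> 0 <= s -> 0 < q -> q * q = 2 -> 1 <= k <= 10 ->
  s + 2 * (k + 1) / ((s * s + 1) * s) < (s * s + 1 - k) / 2 + 2 * k / (q * (q + s)).
Proof.
move=> ss s_ge0 q_gt0 qq k_bd; have /andP[k_ge1 _] := k_bd.
have s_ge : 33/10 <= s by nra.
have q_le : q <= 17/12 by nra.
have qs_gt0 : 0 < q * (q + s) by rewrite pmulr_rgt0 ?ltr_pwDl.
have cs_gt0 : 0 < 17/12 * s + 2 by lra.
have q_bound : 2 * k / (17/12 * s + 2) <= 2 * k / (q * (q + s)).
  rewrite ler_pdivlMr // mulrAC ler_pdivrMr // ler_pM2l; last lra.
  by rewrite mulrDr qq addrC lerD2r ler_wpM2r.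
apply: lt_le_trans (lerD (lexx _) q_bound).
have ns_gt0 : 0 < (s * s + 1) * s by nra.
rewrite -subr_gt0.
set P := (X in 0 < X); have -> : P = ((s*s + 1 - k) * (s*s + 1) * s * (17/12 * s + 2)
      + 4 * k * (s*s + 1) * s - 2 * (s*s + 1) * s * s * (17/12 * s + 2)
      - 4 * (k + 1) * (17/12 * s + 2)) / (2 * ((s * s + 1) * s) * (17/12 * s + 2)).
  rewrite /P; field; apply/and3P; split; apply/negP => /eqP h; lra.
by rewrite divr_gt0 ?gap_poly_gt0 //; apply: mulr_gt0 => //; apply: mulr_gt0.
Qed.

Theorem lemma2p7 (R : rcfType) (T : finType) (e : rel T) (n k : nat) :
  simple_graph e -> connected e ->
  #|T| = n -> (12 <= n)%N ->
  #|edges e| = (n + k)%N -> (1 <= k <= 10)%N ->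
  (forall u : T, (2 <= deg e u)%N) ->
  (Num.sqrt ((n - 1)%:R : R) + 2%:R * (k + 1)%:R / (n%:R * Num.sqrt ((n - 1)%:R : R))
     < randic R e)%R.
Proof.
move=> [e_sym e_irr] _ cardT n_ge12 cardE k_bd deg_ge2.
have n_gt0 : (0 < n)%N by apply: leq_trans n_ge12.
set q : R := Num.sqrt 2; set s : R := Num.sqrt (n - 1)%:R.
set c : R := (q * (q + s))^-1.
have q_gt0 : 0 < q by rewrite sqrtr_gt0.
have qq : q * q = 2 by rewrite -expr2 sqr_sqrtr.
have ss : s * s = (n - 1)%:R by rewrite -expr2 sqr_sqrtr ?ler0n.
have vertex_ge u : 1 + ((deg e u)%:R - 2) * c - (deg e u)%:R / 4
                   <= ((q * Num.sqrt (deg e u)%:R)^-1 - 1/4) *+ deg e u.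
  set a := Num.sqrt (deg e u)%:R.
  have aa : (deg e u)%:R = a * a by rewrite -expr2 sqr_sqrtr ?ler0n.
  rewrite -[(_ - _) *+ _]mulr_natl aa -qq.
  apply: chord_vertex_bound q_gt0 _ _; first by rewrite ler_sqrt ?ler0n // (ler_nat R 2).
  by rewrite ler_sqrt ?ler0n // ler_nat leq_subRL // -cardT deg_lt_card.
have sum_vertex : \sum_u (1 + ((deg e u)%:R - 2) * c - (deg e u)%:R / 4)
                  = (s * s + 1 - k%:R) / 2 + 2 * k%:R * c.
  rewrite !big_split /= sumrN sumr_const -!mulr_suml sumrB sumr_const -natr_sum sum_deg //.
  by rewrite cardE cardT ss natrB // natrM natrD -[2 *+ n]mulr_natr; lra.
have nE : n%:R = s * s + 1 by rewrite ss natrB // subrK.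
rewrite natrD mulr1n nE.
apply: (lt_le_trans (target_lt_bound (k := k%:R) _ (sqrtr_ge0 _) q_gt0 qq _)).
- by rewrite ss ler_nat leq_subRL.
- by rewrite ler1n ler_nat.
rewrite -/c -sum_vertex.
exact: le_trans (ler_sum _ (fun u _ => vertex_ge u)) (randic_ge_vertex_sum R e_sym e_irr deg_ge2).
Qed.
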